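(* Let $M_b=\langle S_b,A_b,T_b\rangle$ be the $b$-bounded MDP of a relational MDP $K=\langle\Sigma,\Delta\rangle$, $\phi$ a relational pCTL sentence, and $C=consts(\phi)\cup consts(\Delta)$. Let $s_1,s_2\in S_b$ with $s_1\sim_C s_2$ via the bijection $f$ (extended by the identity on $C$), and let $\delta=\{H_1\xleftarrow{p_1:\alpha}B,\dots,H_n\xleftarrow{p_n:\alpha}B\}\in\Delta$. For a substitution $\theta_1$ with $s_1\preceq_{\theta_1}B$ and the corresponding indistinguishable substitution $\theta_2=f\circ\theta_1$, consider the ground transition sets $$t(s_1,\alpha\theta_1)=\{h_{1,i}\xleftarrow{p_i:\alpha\theta_1}s_1 \mid H_i\xleftarrow{p_i:\alpha}B\in\delta,\ h_{1,i}=(s_1\setminus B\theta_1)\cup H_i\theta_1\},$$ $$t(s_2,\alpha\theta_2)=\{h_{2,i}\xleftarrow{p_i:\alpha\theta_2}s_2 \mid H_i\xleftarrow{p_i:\alpha}B\in\delta,\ h_{2,i}=(s_2\setminus B\theta_2)\cup H_i\theta_2\}.$$ Then these two sets of ground transitions share the same transition probabilities: $s_1$ under $\alpha\theta_1$ and $s_2$ under $\alpha\theta_2$ have identical probabilities of going to each class of mutually indistinguishable states (under $C$).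
   Context: Relational logic: terms are variables or constants; atoms $p(t_1,\dots,t_m)$; an abstract state is a finite set of atoms. Object identity assumption: distinct terms in a conjunction denote distinct objects. OI-subsumption: $A\preceq_\theta B$ iff $\theta$ is a substitution with $B\theta\subseteq A$ mapping distinct terms of $B$ to distinct terms. A Herbrand interpretation is a set of ground atoms; $\mathit{adom}(s)=consts(s)$. Relational MDP $K=\langle\Sigma,\Delta\rangle$, $\Sigma=\langle R,D\rangle$ ($R$ finite relation symbols, $D$ possibly infinite constants); $\Delta$ a finite set of abstract transitions, each a set of rules $\{H_1\xleftarrow{p_1:\alpha}B,\dots,H_n\xleftarrow{p_n:\alpha}B\}$ with abstract states $H_i,B$, $p_i\in[0,1]$, $\sum_ip_i=1$, $vars(H_i)\subseteq vars(B)$. The underlying ground MDP has Herbrand interpretations as states; from $s$, for each $\theta$ with $s\preceq_\theta B$, action $\alpha\theta$ leads to $(s\setminus B\theta)\cup H_i\theta$ with probability $p_i$. The $b$-bounded MDP $M_b$ restricts to states $s$ with $|\mathit{adom}(s)|\le b$ and transitions between such states. Indistinguishability: for states $s,s'$ with $C\subseteq consts(s)\cap consts(s')$, $s\sim_C s'$ iff there is a bijection $f:consts(s)\setminus C\to consts(s')\setminus C$ such that renaming the constants of $s$ by $f$ (fixing $C$) yields $s'$, i.e. $f(s)=s'$. Indistinguishable states are renamings of one another on the constants outside $C$. *)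

From HB Require Import structures.
From mathcomp Require Import all_boot all_order all_algebra.
From mathcomp Require Import finmap.
From mathcomp Require Import boolp.

Set Implicit Arguments.
Unset Strict Implicit.
Unset Printing Implicit Defensive.
Import GRing.Theory Num.Theory.

Local Open Scope ring_scope.
Local Open Scope fset_scope.

Section RelationalMDP.
(* Rs : relation symbols, D : constants (possibly infinite), V : variables *)
Variables (Rs D V : choiceType).

Definition term : Type := (V + D)%type.
Definition atom : Type := (Rs * seq term)%type.
Definition gatom : Type := (Rs * seq D)%type.
Definition astate : Type := {fset atom}.
Definition gstate : Type := {fset gatom}.

Definition subst : Type := V -> D.

Definition tsub (th : subst) (t : term) : D :=
  match t with inl v => th v | inr c => c end.
Definition asub (th : subst) (a : atom) : gatom := (a.1, map (tsub th) a.2).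
Definition ssub (th : subst) (B : astate) : gstate := [fset asub th a | a in B].

Definition get_var (t : term) : option V := if t is inl v then Some v else None.
Definition get_const (t : term) : option D := if t is inr c then Some c else None.

Definition terms (B : astate) : seq term := flatten [seq a.2 | a <- enum_fset B].
Definition vars (B : astate) : seq V := pmap get_var (terms B).
Definition aconsts (B : astate) : {fset D} := [fset c | c in pmap get_const (terms B)].
Definition atom_consts (a : atom) : {fset D} := [fset c | c in pmap get_const a.2].

Definition gconsts (s : gstate) : {fset D} :=
  [fset c | c in flatten [seq a.2 | a <- enum_fset s]].

Definition oi_subsumes (s : gstate) (th : subst) (B : astate) : Prop :=
  ssub th B `<=` s /\ {in terms B &, injective (tsub th)}.

Definition rename (f : D -> D) (s : gstate) : gstate :=
  [fset (a.1, map f a.2) | a in s].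

Definition indist_via (C : {fset D}) (f : D -> D) (s s' : gstate) : Prop :=
  [/\ (forall c, c \in C -> f c = c),
      {in gconsts s `\` C &, injective f},
      [fset f x | x in gconsts s `\` C] = gconsts s' `\` C
    & rename f s = s'].

Definition indist (C : {fset D}) (s s' : gstate) : Prop :=
  exists f : D -> D, indist_via C f s s'.

Definition bounded (b : nat) (s : gstate) : Prop := (#|` gconsts s| <= b)%N.

Variable R : realFieldType.

(* an abstract transition {H_i <-(p_i : alpha)- B}_i :
   (B, alpha, [:: (H_1, p_1); ...; (H_n, p_n)]) *)
Definition atrans : Type := (astate * atom * seq (astate * R))%type.
Definition tbody (d : atrans) : astate := d.1.1.
Definition tact (d : atrans) : atom := d.1.2.
Definition trules (d : atrans) : seq (astate * R) := d.2.

Definition wf_trans (d : atrans) : Prop :=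
  [/\ \sum_(r <- trules d) r.2 = 1,
      (forall r, r \in trules d -> 0 <= r.2 <= 1)
    & (forall r, r \in trules d -> {subset vars r.1 <= vars (tbody d)})].

Definition trans_consts (d : atrans) : {fset D} :=
  aconsts (tbody d) `|` atom_consts (tact d)
    `|` foldr (fun r acc => aconsts r.1 `|` acc) fset0 (trules d).
Definition delta_consts (Delta : seq atrans) : {fset D} :=
  foldr (fun d acc => trans_consts d `|` acc) fset0 Delta.

Definition succ (s : gstate) (th : subst) (B H : astate) : gstate :=
  (s `\` ssub th B) `|` ssub th H.

(* probability that s, under action alpha theta of transition d, goes to the
   class of states C-indistinguishable from s' *)
Definition class_prob (C : {fset D}) (s : gstate) (th : subst) (d : atrans)
    (s' : gstate) : R :=
  \sum_(r <- trules d | `[< indist C (succ s th (tbody d) r.1) s' >]) r.2.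

End RelationalMDP.

(** The successors of [s2] under [th2 = f \o th1] are exactly the [f]-renamings
    of the successors of [s1] under [th1]: [f] fixes every constant of the
    transition, and it is injective on the constants of [s1] together with [C],
    so renaming commutes with the set difference [s1 `\` B th1].  Each pair of
    corresponding successors is therefore [C]-indistinguishable via [f] itself,
    and since [C]-indistinguishability is an equivalence relation, corresponding
    successors lie in the same classes; the class probabilities are sums of the
    same rule probabilities. *)

From HB Require Import structures.
From mathcomp Require Import all_boot all_order all_algebra.
From mathcomp Require Import finmap.
From mathcomp Require Import boolp.
Local Open Scope fset_scope.
Set Implicit Arguments.
Unset Strict Implicit.

Section Renaming.
Variables (Rs D : choiceType).
Implicit Types (s X Y : gstate Rs D) (f g : D -> D).

Lemma gconstsP s c :
  reflect (exists2 a, a \in s & c \in a.2) (c \in gconsts s).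
Proof.
apply: (iffP idP) => [|[a ain cin]].
  by case/imfsetP => x /= /flattenP [l /mapP [a ain ->] xin] ->; exists a.
by apply/imfsetP; exists c => //=; apply/flattenP; exists a.2 => //; apply/map_f.
Qed.

Lemma gconsts_subset X Y : X `<=` Y -> gconsts X `<=` gconsts Y.
Proof.
move=> /fsubsetP sXY; apply/fsubsetP => c /gconstsP [a ain cin].
by apply/gconstsP; exists a => //; apply: sXY.
Qed.

Lemma gconstsU X Y : gconsts (X `|` Y) = gconsts X `|` gconsts Y.
Proof.
apply/fsetP => c; apply/gconstsP/fsetUP.
  by case=> a /fsetUP [] ain cin; [left|right]; apply/gconstsP; exists a.
by case=> /gconstsP [a ain cin]; exists a; rewrite // inE ain ?orbT.
Qed.

Lemma gconsts_rename f s : gconsts (rename f s) = f @` gconsts s.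
Proof.
apply/fsetP => c; apply/gconstsP/imfsetP.
  case=> _ /imfsetP [a /= ain ->] /mapP [x xin ->].
  by exists x => //; apply/gconstsP; exists a.
case=> x /gconstsP [a ain xin] ->.
by exists (a.1, map f a.2); [apply/imfsetP; exists a | apply/map_f].
Qed.

Lemma rename_comp f g s : rename g (rename f s) = rename (g \o f) s.
Proof.
by rewrite /rename -imfset_comp; apply: eq_imfset => // a; rewrite /= -map_comp.
Qed.

Lemma eq_in_rename f g s : {in gconsts s, f =1 g} -> rename f s = rename g s.
Proof.
move=> efg; apply: eq_in_imfset => a ain; congr (_, _); apply/eq_in_map => c cin.
by apply: efg; apply/gconstsP; exists a.
Qed.

Lemma rename_id s : rename id s = s.
Proof.
rewrite /rename -[RHS]imfset_id; apply: eq_imfset => // -[r cs].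
by rewrite /= map_id.
Qed.

Lemma renameU f X Y : rename f (X `|` Y) = rename f X `|` rename f Y.
Proof. exact: imfsetU. Qed.

Lemma renameD f X Y : {in gconsts X `|` gconsts Y &, injective f} ->
  rename f (X `\` Y) = rename f X `\` rename f Y.
Proof.
move=> finj.
have rename_inj a b : a \in X -> b \in Y ->
    (a.1, map f a.2) = (b.1, map f b.2) -> a = b.
  move=> aX bY [e1 e2]; rewrite [a]surjective_pairing [b]surjective_pairing e1.
  congr (_, _); apply: (inj_in_map finj) => //; apply/allP => c cin;
    rewrite inE; apply/orP; [left|right]; apply/gconstsP; by [exists a|exists b].
apply/fsetP => x; apply/imfsetP/fsetDP.
  case=> a /fsetDP [aX aY] ->; split; first by apply/imfsetP; exists a.
  by apply/imfsetP => -[b bY /(rename_inj _ _ aX bY) ab]; rewrite ab bY in aY.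
case=> /imfsetP [a aX ->] nY; exists a => //; rewrite inE aX andbT.
by apply: contraNN nY => aY; apply/imfsetP; exists a.
Qed.

End Renaming.

Section Indistinguishability.
Variables (Rs D : choiceType).
Implicit Types (s u v w : gstate Rs D) (f g : D -> D) (C : {fset D}).

Lemma indist_viaP C f u v :
  indist_via C f u v <->
  [/\ (forall c, c \in C -> f c = c),
      {in gconsts u `|` C &, injective f} & rename f u = v].
Proof.
split=> [[fC finj fim fren]|[fC finj fren]].
  have fnotC x : x \in gconsts u `|` C -> x \notin C -> f x \notin C.
    move=> xF xC; have /fsetDP [] // : f x \in gconsts v `\` C.
    by rewrite -fim in_imfset // in_fsetD xC; case/fsetUP: xF xC => // ->.
  split=> // x y xF yF.
  have [xC|xC] := boolP (x \in C); have [yC|yC] := boolP (y \in C).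
  - by rewrite fC // fC.
  - by move=> e; have := fnotC y yF yC; rewrite -e fC // xC.
  - by move=> e; have := fnotC x xF xC; rewrite e fC // yC.
  - apply: finj; rewrite in_fsetD ?xC ?yC.
      by case/fsetUP: xF xC => // ->.
    by case/fsetUP: yF yC => // ->.
have fnotC x : x \in gconsts u `\` C -> f x \notin C.
  case/fsetDP=> xu xC; apply: contraNN xC => fxC.
  have <- // : f x = x.
  by apply: (finj); [rewrite inE fxC orbT|rewrite inE xu|rewrite fC].
split=> //.
- by apply: sub_in2 finj => x /fsetDP [xu _]; rewrite inE xu.
- rewrite -fren gconsts_rename; apply/fsetP => y; apply/imfsetP/fsetDP.
    case=> x xA ->; split; last exact: fnotC.
    by case/fsetDP: xA => xu _; apply/imfsetP; exists x.
  case=> /imfsetP [x xu ->] fxC; exists x => //; rewrite inE xu andbT.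
  by apply: contraNN fxC => xC; rewrite fC.
Qed.

Lemma indist_via_comp C f g u v w :
  indist_via C f u v -> indist_via C g v w -> indist_via C (g \o f) u w.
Proof.
move=> /indist_viaP [fC finj fren] /indist_viaP [gC ginj gren].
have fF x : x \in gconsts u `|` C -> f x \in gconsts v `|` C.
  case/fsetUP=> [xu|xC]; last by rewrite fC // inE xC orbT.
  by rewrite -fren gconsts_rename inE in_imfset.
apply/indist_viaP; split.
- by move=> c cC /=; rewrite fC ?gC.
- by move=> x y xF yF /= /ginj e; apply: finj => //; apply: e; apply: fF.
- by rewrite -rename_comp fren.
Qed.

Lemma indist_via_sym C f u v : indist_via C f u v -> indist C v u.
Proof.
move=> /indist_viaP [fC finj fren].
pose F := gconsts u `|` C.
pose g x := if [pick y : F | f (val y) == x] is Some y then val y else x.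
have gK : {in F, cancel f g}.
  move=> y yF; rewrite /g; case: pickP => [z /eqP|/(_ [` yF]) /=].
    by apply: finj => //; apply: fsvalP.
  by rewrite eqxx.
have gC c : c \in C -> g c = c.
  by move=> cC; rewrite -[in LHS](fC c) // gK // inE cC orbT.
have fF : gconsts v `|` C = f @` F.
  by rewrite -fren gconsts_rename imfsetU; congr (_ `|` _); apply/fsetP => c;
    apply/idP/imfsetP => [cC|[x xC ->]]; [exists c; rewrite ?fC|rewrite fC].
exists g; apply/indist_viaP; split=> //.
- rewrite fF => _ _ /imfsetP [x xF ->] /imfsetP [y yF ->].
  by rewrite !gK // => ->.
- rewrite -fren rename_comp -[RHS]rename_id; apply: eq_in_rename => x xu /=.
  by rewrite gK // inE xu.
Qed.

Lemma indist_sym C u v : indist C u v -> indist C v u.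
Proof. by case=> f /indist_via_sym. Qed.

Lemma indist_trans C u v w : indist C u v -> indist C v w -> indist C u w.
Proof.
by case=> f fuv [g gvw]; exists (g \o f); apply: indist_via_comp fuv gvw.
Qed.

Lemma indist_same_class C u v w : indist C u v -> indist C u w <-> indist C v w.
Proof.
move=> uv; split; first by apply: indist_trans; apply: indist_sym.
exact: indist_trans.
Qed.

End Indistinguishability.

Section Successors.
Variables (Rs D V : choiceType).
Implicit Types (s : gstate Rs D) (f : D -> D) (C : {fset D}) (th : subst D V)
  (B H : astate Rs D V).

Lemma termsP B t : reflect (exists2 a, a \in B & t \in a.2) (t \in terms B).
Proof.
apply: (iffP flattenP) => [[l /mapP [a ain ->] tin]|[a ain tin]].
  by exists a.
by exists a.2 => //; apply/map_f.
Qed.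

Lemma mem_vars B x : (x \in vars B) = (inl x \in terms B).
Proof.
rewrite mem_pmap; apply/mapP/idP => [[[y|c] tin //= [->]]|tin] //.
by exists (inl x).
Qed.

Lemma mem_aconsts B c : (c \in aconsts B) = (inr c \in terms B).
Proof.
rewrite /aconsts; apply/imfsetP/idP => [[d /=]|tin].
  by rewrite mem_pmap => /mapP [[y|e] tin //= [->]] ->.
by exists c; rewrite //= mem_pmap; apply/mapP; exists (inr c).
Qed.

Lemma ssub_comp f th B : (forall c, c \in aconsts B -> f c = c) ->
  ssub (f \o th) B = rename f (ssub th B).
Proof.
move=> fB; rewrite /rename /ssub -imfset_comp; apply: eq_in_imfset => a ain /=.
rewrite /asub /= -map_comp; congr (_, _); apply/eq_in_map => -[v|c] tin //=.
by rewrite fB // mem_aconsts; apply/termsP; exists a.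
Qed.

Lemma gconsts_ssub th B H : {subset vars H <= vars B} ->
  gconsts (ssub th H) `<=` gconsts (ssub th B) `|` aconsts H.
Proof.
move=> vHB; apply/fsubsetP => x /gconstsP [_ /imfsetP [h hH ->]].
case/mapP=> [[v|c] tin ->].
  have /termsP [a aB va] : inl v \in terms B.
    by rewrite -mem_vars; apply: vHB; rewrite mem_vars; apply/termsP; exists h.
  rewrite inE; apply/orP; left; apply/gconstsP; exists (asub th a).
    by apply/imfsetP; exists a.
  by apply/mapP; exists (inl v).
by rewrite inE mem_aconsts; apply/orP; right; apply/termsP; exists h.
Qed.

Lemma gconsts_succ s th B H : ssub th B `<=` s -> {subset vars H <= vars B} ->
  gconsts (succ s th B H) `<=` gconsts s `|` aconsts H.
Proof.
move=> sB vHB; rewrite gconstsU fsubUset; apply/andP; split.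
  by apply: fsubset_trans (fsubsetUl _ _); apply/gconsts_subset/fsubsetDl.
apply: fsubset_trans (gconsts_ssub th vHB) _.
by apply: fsetSU; apply: gconsts_subset.
Qed.

Lemma rename_succ f s th B H :
  (forall c, c \in aconsts B `|` aconsts H -> f c = c) ->
  {in gconsts s &, injective f} -> ssub th B `<=` s ->
  rename f (succ s th B H) = succ (rename f s) (f \o th) B H.
Proof.
move=> fBH finj sB.
have fB c : c \in aconsts B -> f c = c by move=> cB; rewrite fBH // inE cB.
have fH c : c \in aconsts H -> f c = c by move=> cH; rewrite fBH // inE cH orbT.
rewrite /succ (ssub_comp th fB) (ssub_comp th fH) renameU renameD //.
by rewrite (fsetUidPl _ _ (gconsts_subset sB)).
Qed.

Lemma succ_indist_via C f s1 s2 th B H :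
  indist_via C f s1 s2 -> ssub th B `<=` s1 ->
  aconsts B `<=` C -> aconsts H `<=` C -> {subset vars H <= vars B} ->
  indist_via C f (succ s1 th B H) (succ s2 (f \o th) B H).
Proof.
move=> /indist_viaP [fC finj <-] sB BC HC vHB.
apply/indist_viaP; split=> //.
- apply: sub_in2 finj; apply/fsubsetP; rewrite fsubUset fsubsetUr andbT.
  exact: fsubset_trans (gconsts_succ sB vHB) (fsetUS _ HC).
- apply: rename_succ => //; last first.
    by apply: sub_in2 finj; apply/fsubsetP/fsubsetUl.
  move=> c /fsetUP [cB|cH]; apply: fC.
    exact: (fsubsetP BC).
  exact: (fsubsetP HC).
Qed.

End Successors.

Section Transitions.
Variables (Rs D V : choiceType) (R : realFieldType).
Implicit Types (d : atrans Rs D V R) (Delta : seq (atrans Rs D V R)).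

Lemma aconsts_tbody_sub d : aconsts (tbody d) `<=` trans_consts d.
Proof. by rewrite /trans_consts -fsetUA fsubsetUl. Qed.

Lemma aconsts_trule_sub d r : r \in trules d -> aconsts r.1 `<=` trans_consts d.
Proof.
move=> rd; apply: fsubset_trans (fsubsetUr _ _); rewrite /trules in rd *.
elim: d.2 rd => //= r' rs IH; rewrite inE => /predU1P [->|/IH rrs].
  exact: fsubsetUl.
exact: fsubset_trans rrs (fsubsetUr _ _).
Qed.

Lemma trans_consts_sub Delta d :
  d \in Delta -> trans_consts d `<=` delta_consts Delta.
Proof.
elim: Delta => //= d' Ds IH; rewrite inE => /predU1P [->|/IH dDs].
  exact: fsubsetUl.
exact: fsubset_trans dDs (fsubsetUr _ _).
Qed.

Lemma class_prob_indist C s1 s2 th1 th2 d s' :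
  (forall r, r \in trules d ->
     indist C (succ s1 th1 (tbody d) r.1) (succ s2 th2 (tbody d) r.1)) ->
  class_prob C s1 th1 d s' = class_prob C s2 th2 d s'.
Proof.
move=> succ12; rewrite /class_prob big_seq_cond [RHS]big_seq_cond.
apply: eq_bigl => r; have [rd|//] := boolP (r \in trules d).
by rewrite (propext (indist_same_class s' (succ12 r rd))).
Qed.

End Transitions.

Theorem proposition2 (Rs D V : choiceType) (R : realFieldType)
    (Delta : seq (atrans Rs D V R)) (b : nat) (Cphi : {fset D})
    (s1 s2 : gstate Rs D) (f : D -> D) (delta : atrans Rs D V R)
    (th1 : subst D V) :
  let C := Cphi `|` delta_consts Delta in
  (forall d, d \in Delta -> wf_trans d) ->
  bounded b s1 -> bounded b s2 ->
  indist_via C f s1 s2 ->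
  delta \in Delta ->
  oi_subsumes s1 th1 (tbody delta) ->
  let th2 := fun v => f (th1 v) in
  forall s' : gstate Rs D,
    class_prob C s1 th1 delta s' = class_prob C s2 th2 delta s'.
Proof.
move=> C wf _ _ s12 delta_in [sB _] th2 s'.
have deltaC : trans_consts delta `<=` C.
  exact: fsubset_trans (trans_consts_sub delta_in) (fsubsetUr _ _).
apply: class_prob_indist => r rd; exists f.
have [_ _ /(_ r rd) vHB] := wf delta delta_in.
apply: succ_indist_via => //.
- exact: fsubset_trans (aconsts_tbody_sub delta) deltaC.
- exact: fsubset_trans (aconsts_trule_sub rd) deltaC.
Qed.
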